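(* Let $G=(V,E)$ be a finite graph with boundary $B\subseteq V$. Let $H=(U,D)$ be a demand graph and $F$ a unit $H$-boundary flow in $G$. Then there exists an integral $H$-boundary flow $F^*$ such that $$\operatorname{con}_2(F^* )\le\operatorname{con}_2(F)+\sqrt{\operatorname{con}_1(F)}.$$ Furthermore, if $|B|\ge|V|^{\frac14+\epsilon}$ for some $\epsilon>0$, then $$\operatorname{con}_2(F^* )\le 2\operatorname{con}_2(F)+|B|^{\frac{2}{1+4\epsilon}}.$$
   Context: For $u,v\in V$, $\mathcal{P}_{uv}$ is the set of simple paths in $G$ between $u$ and $v$; ''$x\in p$'' means $x$ is a vertex of path $p$. Let $\mathcal{P}=\bigcup_{u,v\in B}\mathcal{P}_{uv}$. A boundary flow is a map $F:\mathcal{P}\to\mathbb{R}_+$. Its vertex congestion at $v\in V$ is $C_F(v)=\sum_{p\in\mathcal{P}:v\in p}F(p)$, and $\operatorname{con}_p(F)=\left(\sum_{v\in V}C_F(v)^p\right)^{1/p}$ for $p\ge1$. $F$ is integral if $|\{p\in\mathcal{P}_{uv}:F(p)>0\}|\le1$ for all $u,v\in B$. A demand graph is any graph $H=(U,D)$. $F$ is a unit $H$-boundary flow if there exists an injective map $g:U\to B$ such that $\sum_{p\in\mathcal{P}_{g(i)g(j)}}F(p)=1$ for every edge $(i,j)\in D$, and $F(p)=0$ whenever $p\notin\bigcup_{(i,j)\in D}\mathcal{P}_{g(i)g(j)}$. An integral $H$-boundary flow is a unit $H$-boundary flow that is also integral. *)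

From HB Require Import structures.
From mathcomp Require Import all_boot all_order all_algebra.
From mathcomp Require Import reals exp.
Set Implicit Arguments. Unset Strict Implicit. Unset Printing Implicit Defensive.
Import Order.TTheory GRing.Theory Num.Theory.
Local Open Scope ring_scope.

Definition simple_graph (T : finType) (e : rel T) : Prop :=
  symmetric e /\ irreflexive e.

Section BoundaryFlows.
Variables (V : finType) (e : rel V).

(* Candidate paths: vertex sequences of length <= |V| (a finite type);
   every simple path has at most |V| vertices. *)
Definition pathT := {k : 'I_(#|V|.+1) & k.-tuple V}.
Definition pseq (p : pathT) : seq V := val (tagged p).

Definition simple_path_between (u v : V) (s : seq V) : bool :=
  if s is x :: s' then
    [&& uniq s, path e x s' &
        ((x == u) && (last x s' == v)) || ((x == v) && (last x s' == u))]
  else false.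

Definition inPuv (u v : V) (p : pathT) : bool := simple_path_between u v (pseq p).

Definition inP (B : {set V}) (p : pathT) : bool :=
  [exists u in B, exists v in B, inPuv u v p].

Variable R : realType.

Definition congestion (B : {set V}) (F : pathT -> R) (v : V) : R :=
  \sum_(p : pathT | inP B p && (v \in pseq p)) F p.

Definition con (B : {set V}) (q : R) (F : pathT -> R) : R :=
  powR (\sum_(v : V) powR (congestion B F v) q) q^-1.

Definition boundary_flow (F : pathT -> R) : Prop := forall p, 0 <= F p.

Definition integral_flow (B : {set V}) (F : pathT -> R) : Prop :=
  forall u v, u \in B -> v \in B -> (#|[pred p | inPuv u v p & (0 < F p)%R]| <= 1)%N.

Definition unit_H_flow (U : finType) (D : rel U) (B : {set V}) (F : pathT -> R) : Prop :=
  boundary_flow F /\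
  exists g : U -> V,
    [/\ injective g, (forall i, g i \in B),
        (forall i j, D i j -> \sum_(p : pathT | inPuv (g i) (g j) p) F p = 1) &
        (forall p, ~~ [exists i, exists j, D i j && inPuv (g i) (g j) p] -> F p = 0)].

End BoundaryFlows.

From HB Require Import structures.
From mathcomp Require Import all_boot all_order all_algebra.
From mathcomp Require Import reals exp.
From mathcomp Require Import ring lra.
Set Implicit Arguments. Unset Strict Implicit. Unset Printing Implicit Defensive.
Import Order.TTheory GRing.Theory Num.Theory.
Local Open Scope ring_scope.

(* Derandomized rounding by the method of conditional expectations.  Process
   the demands one at a time, replacing the fractional flow of the current
   demand by a single one of its paths.  If that path p were drawn with
   probability F p, the expectation of the potential
     \sum_v ((A v + C v)^2 + C v),
   with A the congestion of the paths already chosen and C that of the flow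
   not yet rounded, would not increase: the linear term C v pays for the
   variance of the indicator of v \in p.  Hence some path carrying positive
   flow does not increase it, and at the end
     \sum_v C_{F*}(v)^2 <= \sum_v C_F(v)^2 + \sum_v C_F(v) = con_2(F)^2 + con_1(F).
   The first bound follows from sqrt(a + b) <= sqrt a + sqrt b; for the second,
   \sum_v C_F(v) <= \sum_v C_F(v)^2 + |V| and sqrt |V| <= |B|^(2/(1+4 eps)). *)

Lemma exists_le_average (R : realDomainType) (T : finType) (P : pred T)
    (w b : T -> R) (c : R) :
  (forall x, P x -> 0 <= w x) -> \sum_(x | P x) w x = 1 ->
  \sum_(x | P x) w x * b x <= c -> exists x, [/\ P x, 0 < w x & b x <= c].
Proof.
move=> w_ge0 w_sum1 avg_le.
case: (pickP [pred x | [&& P x, 0 < w x & b x <= c]]) => [x /and3P [] | below].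
  by exists x.
have [x0 /andP [Px0 wx0]] : exists x, P x && (0 < w x).
  by apply: psumr_neq0P => //; rewrite w_sum1; exact/eqP/oner_neq0.
have b_gt x : P x -> 0 < w x -> c < b x.
  by move=> Px wx; rewrite ltNge; apply/negP => bx; have := below x; rewrite /= Px wx bx.
suff : c < \sum_(x | P x) w x * b x by rewrite ltNge avg_le.
have drop0 (f : T -> R) : \sum_(x | P x) w x * f x = \sum_(x | P x && (0 < w x)) w x * f x.
  rewrite [RHS]big_mkcondr /=; apply: eq_bigr => x Px.
  by case: ltP => // wx; rewrite (@le_anti _ _ (w x) 0) ?mul0r // wx w_ge0.
rewrite -[c]mul1r -w_sum1 mulr_suml drop0 [X in _ < X]drop0.
apply: ltr_sum => [|x /andP [Px wx]].
  by apply/hasP; exists x0; rewrite ?mem_index_enum ?Px0.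
by rewrite ltr_pM2l // b_gt.
Qed.

Section DerandomizedRounding.
Variables (R : realDomainType) (P V Q : finType).
Variables (visits : P -> V -> bool) (cls : P -> Q).

Definition load (F : P -> R) (v : V) : R := \sum_p F p * (visits p v)%:R.

Definition potential (A : V -> R) (F : P -> R) : R :=
  \sum_v ((A v + load F v) ^+ 2 + load F v).

Definition drop_class (F : P -> R) (q : Q) (p : P) : R :=
  if cls p == q then 0 else F p.

Lemma load_drop_class F q v :
  load F v = \sum_(p | cls p == q) F p * (visits p v)%:R + load (drop_class F q) v.
Proof.
rewrite big_mkcond /load -big_split /=; apply: eq_bigr => p _; rewrite /drop_class.
by case: ifP => _; rewrite ?mul0r ?add0r ?addr0.
Qed.

Lemma potential_average F q (A : V -> R) :
  \sum_(p | cls p == q) F p = 1 ->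
  \sum_(p | cls p == q) F p * potential (fun v => A v + (visits p v)%:R) (drop_class F q)
  <= potential A F.
Proof.
move=> mass1; under eq_bigr => p _ do rewrite big_distrr.
rewrite /= exchange_big /=; apply: ler_sum => v _.
set L := load (drop_class F q) v; set a := A v + L.
set x := \sum_(p | cls p == q) F p * (visits p v)%:R.
have termE p : F p * ((A v + (visits p v)%:R + L) ^+ 2 + L)
    = F p * (a ^+ 2 + L) + (2 * a + 1) * (F p * (visits p v)%:R).
  by rewrite /a; case: (visits p v) => /=; ring.
rewrite (eq_bigr _ (fun p _ => termE p)) big_split /= -big_distrl -big_distrr /=.
rewrite mass1 mul1r (load_drop_class F q) -/x -/L -subr_ge0.
have -> : (A v + (x + L)) ^+ 2 + (x + L) - ((a ^+ 2 + L) + (2 * a + 1) * x) = x ^+ 2.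
  by rewrite /a; ring.
exact: sqr_ge0.
Qed.

Lemma exists_rounding (p0 : P) (S : {set Q}) (F : P -> R) (A : V -> R) :
  (forall p, 0 <= F p) ->
  (forall q, q \in S -> \sum_(p | cls p == q) F p = 1) ->
  (forall p, cls p \notin S -> F p = 0) ->
  exists sigma : Q -> P,
    (forall q, q \in S -> cls (sigma q) = q /\ 0 < F (sigma q)) /\
    \sum_v (A v + \sum_(q in S) (visits (sigma q) v)%:R) ^+ 2 <= potential A F.
Proof.
move: {2}#|S| (erefl #|S|) => n; elim: n S F A => [|n IH] S F A cardS F_ge0 mass1 F_off.
  have S0 : S = set0 by apply/eqP; rewrite -cards_eq0 cardS.
  have load0 v : load F v = 0 by rewrite /load big1 // => p _; rewrite F_off ?mul0r // S0 inE.
  exists (fun _ => p0); split=> [q|]; first by rewrite S0 inE.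
  by apply: ler_sum => v _; rewrite load0 S0 big_set0 !addr0.
have [q qS] : exists q, q \in S by apply/set0Pn; rewrite -card_gt0 cardS.
have [p [/eqP cls_p Fp_gt0 pot_p]] := exists_le_average (fun p _ => F_ge0 p)
  (mass1 q qS) (potential_average A (mass1 q qS)).
have cardS' : #|S :\ q| = n by move: cardS; rewrite (cardsD1 q S) qS add1n => -[].
have [||| sigma [sigmaP pot_sigma]] :=
  IH (S :\ q) (drop_class F q) (fun v => A v + (visits p v)%:R) cardS'.
- by move=> r; rewrite /drop_class; case: ifP.
- move=> r /setD1P [rq rS]; rewrite -(mass1 r rS).
  by apply: eq_bigr => s /eqP cls_s; rewrite /drop_class cls_s (negbTE rq).
- by move=> r; rewrite /drop_class !inE negb_and negbK; case: eqP => //= _; exact: F_off.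
exists (fun r => if r == q then p else sigma r); split.
  move=> r rS; case: eqP => [->|/eqP rq] //.
  have [|cls_r] := sigmaP r; first by rewrite !inE rq.
  by rewrite /drop_class cls_r (negbTE rq).
apply: le_trans pot_p; apply: le_trans pot_sigma; rewrite le_eqVlt; apply/orP; left.
apply/eqP; apply: eq_bigr => v _; rewrite (bigD1 q) //= eqxx addrA; congr ((_ + _) ^+ 2).
by apply: eq_big => [r|r /andP [_ rq]]; rewrite ?inE 1?andbC // (negbTE rq).
Qed.

End DerandomizedRounding.

Lemma sum_eqb_natr (R : pzSemiRingType) (T : finType) (P : pred T) (x : T) :
  \sum_(i | P i) ((x == i)%:R : R) = (P x)%:R.
Proof.
rewrite big_mkcond (bigD1 x) //= eqxx big1 ?addr0; first by case: (P x).
by move=> i /negbTE; rewrite eq_sym => ->; case: (P i).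
Qed.

Lemma eq_set2 (T : finType) (x y u v : T) : u != v ->
  ([set x; y] == [set u; v]) = ((x == u) && (y == v)) || ((x == v) && (y == u)).
Proof.
move=> uv; apply/eqP/idP => [xy_uv|]; last first.
  by case/orP => /andP [/eqP -> /eqP ->] //; rewrite setUC.
have := set21 u v; have := set22 u v; rewrite -xy_uv !inE.
by do 2 case/orP => /eqP ?; subst; rewrite ?eqxx ?orbT //; rewrite eqxx in uv.
Qed.

Section BoundaryPaths.
Variables (V : finType) (e : rel V).

Definition simple_seq (s : seq V) : bool :=
  if s is x :: s' then uniq s && path e x s' else false.

Definition endpoints (p : pathT V) : {set V} :=
  if pseq p is x :: s then [set x; last x s] else set0.

Definition visits (B : {set V}) (p : pathT V) (v : V) : bool :=
  inP e B p && (v \in pseq p).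

Lemma inPuvE u v p : u != v ->
  inPuv e u v p = simple_seq (pseq p) && (endpoints p == [set u; v]).
Proof.
move=> uv; rewrite /inPuv /endpoints /simple_path_between.
by case: (pseq p) => [|x s] //=; rewrite eq_set2 // andbA.
Qed.

Lemma inPuv_endpoints u v p : inPuv e u v p -> endpoints p = [set u; v].
Proof.
rewrite /inPuv /endpoints /simple_path_between.
case: (pseq p) => [|x s] //= /and3P [_ _ /orP [] /andP [/eqP -> /eqP ->]] //.
by rewrite setUC.
Qed.

Lemma inPuv_simple u v p : inPuv e u v p -> simple_seq (pseq p).
Proof.
rewrite /inPuv /simple_path_between.
by case: (pseq p) => [|x s] //= /and3P [-> -> _].
Qed.

Variables (R : realType) (B : {set V}).

Lemma congestion_load (F : pathT V -> R) v : congestion e B F v = load (visits B) F v.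
Proof.
rewrite /congestion /load big_mkcond; apply: eq_bigr => p _.
by rewrite /visits; case: (_ && _); rewrite ?mulr1 ?mulr0.
Qed.

Lemma congestion_ge0 (F : pathT V -> R) v : boundary_flow F -> 0 <= congestion e B F v.
Proof. by move=> F_ge0; apply: sumr_ge0 => p _; apply: F_ge0. Qed.

Lemma con2E (F : pathT V -> R) : boundary_flow F ->
  con e B 2 F = Num.sqrt (\sum_v congestion e B F v ^+ 2).
Proof.
move=> F_ge0; rewrite /con powR12_sqrt; last by apply: sumr_ge0 => v _; apply: powR_ge0.
by congr Num.sqrt; apply: eq_bigr => v _; rewrite powR_mulrn // congestion_ge0.
Qed.

Lemma con1E (F : pathT V -> R) : boundary_flow F ->
  con e B 1 F = \sum_v congestion e B F v.
Proof.
move=> F_ge0; rewrite /con invr1 powRr1; last by apply: sumr_ge0 => v _; apply: powR_ge0.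
by apply: eq_bigr => v _; rewrite powRr1 // congestion_ge0.
Qed.

End BoundaryPaths.

Section HFlowRounding.
Variables (R : realType) (V : finType) (e : rel V) (B : {set V}).
Variables (U : finType) (D : rel U) (g : U -> V) (F : pathT V -> R).
Hypotheses (D_irr : irreflexive D) (g_inj : injective g) (gB : forall i, g i \in B).
Hypothesis F_ge0 : boundary_flow F.
Hypothesis F_unit :
  forall i j, D i j -> \sum_(p : pathT V | inPuv e (g i) (g j) p) F p = 1.
Hypothesis F_supp :
  forall p, ~~ [exists i, exists j, D i j && inPuv e (g i) (g j) p] -> F p = 0.

Definition demands : {set {set V}} :=
  [set [set g ij.1; g ij.2] | ij in [pred ij | D ij.1 ij.2]].

Lemma demandsP i j : D i j -> [set g i; g j] \in demands.
Proof. by move=> Dij; apply/imsetP; exists (i, j). Qed.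

Lemma demand_neq i j : D i j -> g i != g j.
Proof. by move=> Dij; apply: contraTneq Dij => /g_inj ->; rewrite D_irr. Qed.

Lemma flow_support p : F p != 0 -> exists i j, D i j /\ inPuv e (g i) (g j) p.
Proof.
move=> Fp; case: (boolP [exists i, exists j, D i j && inPuv e (g i) (g j) p]).
  by case/existsP => i /existsP [j /andP [Dij p_ij]]; exists i, j.
by move/F_supp => Fp0; rewrite Fp0 eqxx in Fp.
Qed.

Lemma demand_mass q : q \in demands -> \sum_(p | endpoints p == q) F p = 1.
Proof.
case/imsetP => -[i j] /= Dij ->; rewrite -(F_unit Dij) big_mkcond [RHS]big_mkcond.
apply: eq_bigr => p _; rewrite inPuvE ?demand_neq //.
case: (boolP (simple_seq e (pseq p))) => //= not_simple; case: ifP => // _.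
by apply/eqP; apply: contraNT not_simple => /flow_support [i' [j' [_ /inPuv_simple]]].
Qed.

Lemma flow_off_demands p : endpoints p \notin demands -> F p = 0.
Proof.
apply: contraNeq => /flow_support [i [j [Dij p_ij]]].
by rewrite (inPuv_endpoints p_ij) demandsP.
Qed.

Definition rounded (sigma : {set V} -> pathT V) (p : pathT V) : R :=
  \sum_(q in demands) (sigma q == p)%:R.

Lemma congestion_rounded sigma v :
  congestion e B (rounded sigma) v = \sum_(q in demands) (visits e B (sigma q) v)%:R.
Proof.
by rewrite /congestion /rounded exchange_big; apply: eq_bigr => q _; apply: sum_eqb_natr.
Qed.

Lemma exists_rounded_flow (p0 : pathT V) :
  exists sigma, (forall q, q \in demands -> endpoints (sigma q) = q /\ 0 < F (sigma q)) /\
    \sum_v congestion e B (rounded sigma) v ^+ 2 <=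
    \sum_v congestion e B F v ^+ 2 + \sum_v congestion e B F v.
Proof.
have [sigma [sigmaP pot]] := exists_rounding (visits e B) p0
  (fun _ => 0) F_ge0 demand_mass flow_off_demands.
exists sigma; split=> //; rewrite -big_split /=.
under eq_bigr => v _ do rewrite congestion_rounded -[X in X ^+ 2]add0r.
by under [X in _ <= X]eq_bigr => v _ do rewrite congestion_load -[X in X ^+ 2]add0r.
Qed.

Variable sigma : {set V} -> pathT V.
Hypothesis sigmaP : forall q, q \in demands -> endpoints (sigma q) = q /\ 0 < F (sigma q).

Lemma rounded_path q : q \in demands -> exists i j, D i j /\ inPuv e (g i) (g j) (sigma q).
Proof. by move=> /sigmaP [_ /gt_eqF/negbT]; apply: flow_support. Qed.

Lemma rounded_support p : rounded sigma p != 0 -> exists2 q, q \in demands & sigma q = p.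
Proof.
move=> p_supp; case: (boolP [exists q, (q \in demands) && (sigma q == p)]).
  by case/existsP => q /andP [q_dem /eqP sigma_q]; exists q.
move/existsPn => not_image; rewrite /rounded big1 ?eqxx // in p_supp.
by move=> q q_dem; have := not_image q; rewrite q_dem /= => /negbTE ->.
Qed.

Lemma rounded_unit_H_flow : unit_H_flow e D B (rounded sigma).
Proof.
split=> [p|]; first by apply: sumr_ge0 => q _; apply: ler0n.
exists g; split=> // [i j Dij|p no_demand].
  rewrite /rounded exchange_big /= (eq_bigr (fun q => ([set g i; g j] == q)%:R)).
    by rewrite (sum_eqb_natr _ (fun q => q \in demands)) demandsP.
  move=> q q_dem; rewrite sum_eqb_natr.
  have [i' [j' [_ /inPuv_simple simple_q]]] := rounded_path q_dem.
  by rewrite inPuvE ?demand_neq // simple_q (proj1 (sigmaP q_dem)) eq_sym.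
apply/eqP; apply: contraNT no_demand => /rounded_support [q q_dem <-].
have [i [j [Dij q_ij]]] := rounded_path q_dem.
by apply/existsP; exists i; apply/existsP; exists j; rewrite Dij.
Qed.

Lemma rounded_integral : integral_flow e B (rounded sigma).
Proof.
move=> u v _ _; apply/card_le1_eqP => p1 p2.
suff onto p : inPuv e u v p && (0 < rounded sigma p) -> p = sigma [set u; v].
  by move=> /onto -> /onto ->.
case/andP => p_uv /gt_eqF/negbT/rounded_support [q q_dem sigma_q]; subst p.
by rewrite -(inPuv_endpoints p_uv) (proj1 (sigmaP q_dem)).
Qed.

End HFlowRounding.

Lemma sqrtrD_le (R : rcfType) (x y : R) : 0 <= x -> 0 <= y ->
  Num.sqrt (x + y) <= Num.sqrt x + Num.sqrt y.
Proof.
move=> x_ge0 y_ge0; have sx := sqrtr_ge0 x; have sy := sqrtr_ge0 y.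
rewrite -[X in _ <= X]ger0_norm ?addr_ge0 // -sqrtr_sqr ler_sqrt ?sqr_ge0 //.
by rewrite sqrrD !sqr_sqrtr //; have := mulr_ge0 sx sy; lra.
Qed.

Lemma sqrt_le_2sqrtD (R : rcfType) (t x y : R) : 0 <= x -> 0 <= y ->
  t <= 2 * x + y -> Num.sqrt t <= 2 * Num.sqrt x + Num.sqrt y.
Proof.
move=> x_ge0 y_ge0 t_le; have t_le4 : t <= 4 * x + y by lra.
have sqrt4 : Num.sqrt 4 = 2 :> R.
  by rewrite -[4 : R]/((2 * 2)%N%:R) natrM -expr2 sqrtr_sqr ger0_norm.
apply: le_trans (ler_wsqrtr t_le4) _.
by apply: le_trans (sqrtrD_le _ _) _; rewrite ?mulr_ge0 // sqrtrM // sqrt4.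
Qed.

Lemma sum_le_sum_sqr_card (R : realDomainType) (T : finType) (c : T -> R) :
  \sum_i c i <= \sum_i c i ^+ 2 + #|T|%:R.
Proof.
rewrite -[#|T|%:R]sumr_const -big_split /=; apply: ler_sum => i _.
nra.
Qed.

Lemma sqrt_le_powR (R : realType) (n b eps : R) : 0 <= n -> 0 < eps ->
  powR n (4^-1 + eps) <= b -> Num.sqrt n <= powR b (2 / (1 + 4 * eps)).
Proof.
move=> n_ge0 eps_gt0 nb; rewrite -powR12_sqrt //.
have -> : (2^-1 : R) = (4^-1 + eps) * (2 / (1 + 4 * eps)) by field; lra.
rewrite powRrM; apply: ge0_ler_powR => //; rewrite ?nnegrE ?powR_ge0 //.
- by apply: divr_ge0 => //; lra.
- exact: le_trans (powR_ge0 _ _) nb.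
Qed.

Theorem mainTheorem11 (R : realType) (V : finType) (e : rel V) (B : {set V})
  (U : finType) (D : rel U) (F : pathT V -> R) :
  simple_graph e -> simple_graph D -> unit_H_flow e D B F ->
  exists Fs : pathT V -> R,
    [/\ unit_H_flow e D B Fs, integral_flow e B Fs,
        con e B 2 Fs <= con e B 2 F + Num.sqrt (con e B 1 F) &
        forall eps : R, 0 < eps ->
          powR (#|V|%:R) (4^-1 + eps) <= (#|B|%:R) ->
          con e B 2 Fs <= 2 * con e B 2 F + powR (#|B|%:R) (2 / (1 + 4 * eps))].
Proof.
move=> _ [_ D_irr] [F_ge0 [g [g_inj gB F_unit F_supp]]].
have [sigma [sigmaP sum_sqr_le]] :=
  exists_rounded_flow B D_irr g_inj F_ge0 F_unit F_supp (existT _ ord0 [tuple]).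
have Fs_flow := rounded_unit_H_flow D_irr g_inj gB F_supp sigmaP.
have S_ge0 : 0 <= \sum_v congestion e B F v.
  by apply: sumr_ge0 => v _; exact: congestion_ge0.
have S2_ge0 : 0 <= \sum_v congestion e B F v ^+ 2.
  by apply: sumr_ge0 => v _; exact: sqr_ge0.
exists (rounded R D g sigma); split=> //.
- exact: (@rounded_integral _ _ e B _ _ _ _ _ sigmaP).
- rewrite !con2E ?con1E //; last by case: Fs_flow.
  exact: le_trans (ler_wsqrtr sum_sqr_le) (sqrtrD_le S2_ge0 S_ge0).
- move=> eps eps_gt0 large_B; rewrite !con2E //; last by case: Fs_flow.
  apply: le_trans (sqrt_le_2sqrtD S2_ge0 (ler0n _ _) _) _.
    apply: le_trans sum_sqr_le _; rewrite mulr_natl mulr2n -addrA lerD2l.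
    exact: sum_le_sum_sqr_card.
  by rewrite lerD2l; exact: sqrt_le_powR.
Qed.
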